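(* Let $\mathbf{k}$ be a field and let $\mathfrak{B}=\mathbf{k}\langle g,x\rangle$ be the free algebra on $g,x$, made into a bialgebra by $\Delta(g)=g\otimes g$, $\Delta(x)=x\otimes 1+g\otimes x$, $\varepsilon(g)=1$, $\varepsilon(x)=0$. For integers $k,l\ge 0$ let $C_{k,l}$ be the sum of all monomials in $g,x$ containing exactly $k$ letters $g$ and $l$ letters $x$ (so $C_{0,0}=1$), and set $C_{k,l}=0$ if $k<0$ or $l<0$. Then: (1) $C_{k,l}=g\,C_{k-1,l}+x\,C_{k,l-1}=C_{k-1,l}\,g+C_{k,l-1}\,x$; (2) $\Delta(x^n)=\sum_{k\ge0}C_{k,n-k}\otimes x^k$ for all $n\ge0$; (3) $\Delta(C_{p,q})=\sum_{k\ge0}C_{p+k,q-k}\otimes C_{p,k}$. *)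

From mathcomp Require Import all_boot all_order all_algebra.
Set Implicit Arguments. Unset Strict Implicit. Unset Printing Implicit Defensive.
Import GRing.Theory.
Local Open Scope ring_scope.

(* Words in the letters g (encoded [true]) and x (encoded [false]). *)
Definition word := seq bool.

Section FreeAlg.
Variable K : fieldType.

Definition B := word -> K.
Definition BB := word -> word -> K.

Definition zeroB : B := fun _ => 0.
Definition addB (f h : B) : B := fun w => f w + h w.
Definition mon (w : word) : B := fun u => (u == w)%:R.
Definition oneB : B := mon [::].
Definition gB : B := mon [:: true].
Definition xB : B := mon [:: false].
Definition mulB (f h : B) : B :=
  fun w => \sum_(i < (size w).+1) f (take i w) * h (drop i w).
Fixpoint powB (f : B) (n : nat) : B :=
  if n is m.+1 then mulB f (powB f m) else oneB.

Definition addT (F H : BB) : BB := fun u v => F u v + H u v.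
Definition oneT : BB := fun u v => ((u == [::]) && (v == [::]))%:R.
Definition mulT (F H : BB) : BB :=
  fun u v => \sum_(i < (size u).+1) \sum_(j < (size v).+1)
               F (take i u) (take j v) * H (drop i u) (drop j v).
Definition tens (f h : B) : BB := fun u v => f u * h v.

Definition deltaLetter (b : bool) : BB :=
  if b then tens gB gB else addT (tens xB oneB) (tens gB xB).
Definition deltaWord (w : word) : BB :=
  foldr (fun b acc => mulT (deltaLetter b) acc) oneT w.
(* linear extension: the coefficient of u⊗v in Delta(w) vanishes unless
   size w = size u, so only words of length size u contribute. *)
Definition Delta (f : B) : BB :=
  fun u v => \sum_(w : (size u).-tuple bool) f w * deltaWord w u v.

Definition C (k l : int) : B :=
  match k, l with
  | Posz a, Posz b =>
      fun u => \sum_(t : (a + b).-tuple bool | count id t == a) mon t u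
  | _, _ => zeroB
  end.

End FreeAlg.

(* Coefficientwise, C_{p,q} is the indicator of the words with p letters g
   and q letters x, and Δ(f) can be read off letter by letter: the first
   letter of u, together with the first letter of v when u starts with g,
   tells which of x ⊗ 1, g ⊗ g, g ⊗ x produced the first letters of u ⊗ v,
   hence the first letter c of the monomial of f responsible for it, so that
   the coefficient of (a u) ⊗ v in Δ(f) is that of u ⊗ v' in Δ(c⁻¹f).  Left
   quotients of C_{p,q} by a letter are again of the form C_{p',q'}, which
   gives (3) by induction on u; (2) is the case p = 0 since x^n = C_{0,n};
   (1) splits off the first or last letter of a word. *)

From mathcomp Require Import all_boot all_order all_algebra.
From Stdlib Require Import FunctionalExtensionality.
Set Implicit Arguments.
Unset Strict Implicit.
Unset Printing Implicit Defensive.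
Import GRing.Theory.
Local Open Scope ring_scope.

Arguments C : simpl never.

Lemma big_tuple0 (R : nmodType) (T : finType) (F : seq T -> R) :
  \sum_(t : 0.-tuple T) F t = F [::].
Proof. by rewrite (big_pred1 [tuple]) // => t; apply/esym/eqP; apply: tuple0. Qed.

Lemma big_tuple_cons (R : nmodType) (T : finType) n (F : seq T -> R) :
  \sum_(t : n.+1.-tuple T) F t = \sum_(x : T) \sum_(t : n.-tuple T) F (x :: t).
Proof.
rewrite pair_big /= (reindex (fun p : T * n.-tuple T => [tuple of p.1 :: p.2])) //.
exists (fun t : n.+1.-tuple T => (thead t, [tuple of behead t])) => [[x t] _ | t _].
  by rewrite theadE; congr pair; apply: val_inj.
by rewrite -tuple_eta.
Qed.

Section Coefficients.
Variable K : fieldType.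
Implicit Types (f F : B K) (H : BB K) (u v w : word).

Lemma mul_monB u0 F w :
  mulB (mon K u0) F w = (take (size u0) w == u0)%:R * F (drop (size u0) w).
Proof.
have size_take_ord (i : 'I_(size w).+1) : size (take i w) = i.
  by rewrite size_takel // -ltnS.
rewrite /mulB /mon; have [le_u0w | lt_wu0] := leqP (size u0) (size w).
  rewrite (bigD1 (Ordinal (le_u0w : (size u0 < (size w).+1)%N))) //= big1 ?addr0 // => i ne_i.
  suff /negbTE-> : take i w != u0 by rewrite mul0r.
  by apply: contraNneq ne_i => take_i; apply/eqP/val_inj; rewrite /= -take_i size_take_ord.
rewrite take_oversize ?(ltnW lt_wu0) // big1 => [|i _].
  by rewrite (_ : w == u0 = false) ?mul0r //; apply: contraTF lt_wu0 => /eqP->; rewrite ltnn.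
rewrite (_ : take i w == u0 = false) ?mul0r //; apply: contraTF lt_wu0 => /eqP<-.
by rewrite size_take_ord -leqNgt -ltnS.
Qed.

Lemma mulB_mon F u0 w :
  mulB F (mon K u0) w =
    (drop (size w - size u0) w == u0)%:R * F (take (size w - size u0) w).
Proof.
rewrite /mulB /mon; have [le_u0w | lt_wu0] := leqP (size u0) (size w).
  have lt_j : (size w - size u0 < (size w).+1)%N by rewrite ltnS leq_subr.
  rewrite (bigD1 (Ordinal lt_j)) //= mulrC big1 ?addr0 // => i ne_i.
  suff /negbTE-> : drop i w != u0 by rewrite mulr0.
  apply: contraNneq ne_i => drop_i; apply/eqP/val_inj => /=.
  by rewrite -drop_i size_drop subKn // -ltnS.
rewrite (eqP (ltnW lt_wu0)) drop0 take0 big1 => [|i _].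
  by rewrite (_ : w == u0 = false) ?mul0r //; apply: contraTF lt_wu0 => /eqP->; rewrite ltnn.
rewrite (_ : drop i w == u0 = false) ?mulr0 //; apply: contraTF lt_wu0 => /eqP<-.
by rewrite size_drop -leqNgt leq_subr.
Qed.

Lemma mulT_tens f F H u v :
  mulT (tens f F) H u v = mulB f (fun s => mulB F (H s) v) u.
Proof.
apply: eq_bigr => i _; rewrite mulr_sumr.
by apply: eq_bigr => j _; rewrite mulrA.
Qed.

Lemma mulT_addl H1 H2 H u v :
  mulT (addT H1 H2) H u v = mulT H1 H u v + mulT H2 H u v.
Proof.
rewrite /mulT -big_split; apply: eq_bigr => i _; rewrite -big_split.
by apply: eq_bigr => j _; rewrite /addT mulrDl.
Qed.

(* The term of Δ(b) producing the first letter [a] of the left word is x ⊗ 1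
   if a = x, which forces b = x and leaves v intact; if a = g it is g ⊗ c,
   with c the first letter of v, which forces b = c.  [delta_step a v]
   returns that b and the rest of v. *)
Definition delta_step (a : bool) v : option (bool * word) :=
  if a then (if v is c :: v' then Some (c, v') else None) else Some (false, v).

Lemma deltaWord_cons b w a u v :
  deltaWord K (b :: w) (a :: u) v =
    if delta_step a v is Some (c, v') then (b == c)%:R * deltaWord K w u v' else 0.
Proof.
rewrite /= -/(deltaWord K w) /deltaLetter.
case: b a v => [] [] [|[] v];
  rewrite ?mulT_addl !mulT_tens !mul_monB /= ?take0 ?drop0 ?eqxx /=;
  by rewrite !(mul0r, mul1r, mulr0, addr0, add0r).
Qed.

Lemma eq_Delta f F u v : f =1 F -> Delta f u v = Delta F u v.
Proof. by move=> eq_fF; apply: eq_bigr => w _; rewrite eq_fF. Qed.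

Lemma Delta_eq0 f u v : f =1 zeroB K -> Delta f u v = 0.
Proof. by move=> f0; apply: big1 => w _; rewrite f0 mul0r. Qed.

Lemma Delta_nil f v : Delta f [::] v = f [::] * (v == [::])%:R.
Proof. by rewrite /Delta /= (big_tuple0 (fun w => f w * deltaWord K w [::] v)). Qed.

Lemma Delta_cons f a u v :
  Delta f (a :: u) v =
    if delta_step a v is Some (c, v') then Delta (fun w => f (c :: w)) u v' else 0.
Proof.
rewrite /Delta /= (big_tuple_cons _ (fun w => f w * deltaWord K w (a :: u) v)).
under eq_bigr do under eq_bigr do rewrite deltaWord_cons.
case: (delta_step a v) => [[c v']|]; last first.
  by rewrite big1 // => b _; rewrite big1 // => w _; rewrite mulr0.
rewrite (bigD1 c) //= [X in _ + X]big1 ?addr0 => [|b /negbTE ne_bc].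
  by apply: eq_bigr => w _; rewrite eqxx mul1r.
by rewrite big1 // => w _; rewrite ne_bc mul0r mulr0.
Qed.

Lemma C_indicator (p q : nat) w :
  C K p q w = ((count id w == p) && (count negb w == q))%:R.
Proof.
have count_gx s : (count id s + count negb s)%N = size s := count_predC id s.
rewrite /C /mon; have [/andP[/eqP gw /eqP xw] | counts_w] := boolP (_ && _).
  have size_w : size w == (p + q)%N by rewrite -count_gx gw xw.
  rewrite (bigD1 (Tuple size_w)) /= ?gw //= eqxx big1 ?addr0 // => t /andP[_ ne_t].
  by rewrite (_ : w == t = false) //; apply: contraNF ne_t => /eqP w_t; apply/eqP/val_inj.
apply: big1 => t /eqP gt; rewrite (_ : w == t = false) //.
apply: contraNF counts_w => /eqP->; have := count_gx t; rewrite size_tuple gt => /addnI->.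
by rewrite !eqxx.
Qed.

Lemma C_nil (p q : nat) : C K p q [::] = ((p == 0%N) && (q == 0%N))%:R.
Proof. by rewrite C_indicator /= ![0%N == _]eq_sym. Qed.

Lemma C_00 w : C K 0%N 0%N w = (w == [::])%:R.
Proof. by rewrite C_indicator; case: w => [|[] w] //=; rewrite add1n ?andbF. Qed.

Lemma C_cons_g0 (q : nat) w : C K 0%N q (true :: w) = 0.
Proof. by rewrite C_indicator. Qed.

Lemma C_cons_gS (p q : nat) w : C K p.+1 q (true :: w) = C K p q w.
Proof. by rewrite !C_indicator /= add1n eqSS. Qed.

Lemma C_cons_x0 (p : nat) w : C K p 0%N (false :: w) = 0.
Proof. by rewrite C_indicator /= andbF. Qed.

Lemma C_cons_xS (p q : nat) w : C K p q.+1 (false :: w) = C K p q w.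
Proof. by rewrite !C_indicator /= add1n eqSS. Qed.

Lemma Delta_C (p q : nat) u v :
  Delta (C K p q) u v = \sum_(k < q.+1) C K (p + k)%N (q - k)%N u * C K p k v.
Proof.
elim: u p q v => [|a u IHu] p q v.
  rewrite Delta_nil big_ord_recl big1 => [|k _]; last by rewrite C_nil lift0 addnS mul0r.
  rewrite addn0 subn0 !C_nil addr0.
  by case: p q => [|p] [|q]; rewrite ?C_00 //= !mul0r.
rewrite Delta_cons; case: a; first case: v => [|[] v]; rewrite /=.
- apply/esym/big1 => k _.
  by case: p k => [|p] [[|k] ?]; rewrite C_nil ?add0n ?C_cons_g0 //= ?mul0r ?mulr0.
- case: p => [|p].
    rewrite Delta_eq0 => [|w]; last exact: C_cons_g0.
    by apply/esym/big1 => k _; rewrite C_cons_g0 mulr0.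
  rewrite (eq_Delta _ _ (C_cons_gS p q)) IHu.
  by apply: eq_bigr => k _; rewrite addSn !C_cons_gS.
- rewrite big_ord_recl C_cons_x0 mulr0 add0r; case: q => [|q].
    by rewrite big_ord0 Delta_eq0 // => w; exact: C_cons_x0.
  rewrite (eq_Delta _ _ (C_cons_xS p q)) IHu.
  by apply: eq_bigr => k _; rewrite lift0 addnS subSS C_cons_gS C_cons_xS.
- rewrite big_ord_recr /= subnn C_cons_x0 mul0r addr0; case: q => [|q].
    by rewrite big_ord0 Delta_eq0 // => w; exact: C_cons_x0.
  rewrite (eq_Delta _ _ (C_cons_xS p q)) IHu.
  by apply: eq_bigr => k _; rewrite subSn ?C_cons_xS // -ltnS.
Qed.

Lemma C_cons (k l : nat) a w :
  C K k l (a :: w) = if a then C K (k%:Z - 1) l w else C K k (l%:Z - 1) w.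
Proof.
case: a; [case: k => [|k] | case: l => [|l]].
- by rewrite C_cons_g0.
- by rewrite C_cons_gS -predn_int.
- by rewrite C_cons_x0.
- by rewrite C_cons_xS -predn_int.
Qed.

Lemma C_rcons (p q : nat) w a : C K p q (rcons w a) = C K p q (a :: w).
Proof.
have /permP count_rcons : perm_eq (rcons w a) (a :: w) by rewrite perm_rcons.
by rewrite !C_indicator !count_rcons.
Qed.

Lemma C_recl (k l : nat) : (0 < k + l)%N ->
  C K k l =1 addB (mulB (gB K) (C K (k%:Z - 1) l)) (mulB (xB K) (C K k (l%:Z - 1))).
Proof.
move=> kl_gt0 [|a w]; rewrite /addB !mul_monB /=.
  by rewrite C_nil -addn_eq0 eqn0Ngt kl_gt0 !mul0r addr0.
by rewrite C_cons take0 drop0; case: a; rewrite /= !(mul1r, mul0r, addr0, add0r).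
Qed.

Lemma C_recr (k l : nat) : (0 < k + l)%N ->
  C K k l =1 addB (mulB (C K (k%:Z - 1) l) (gB K)) (mulB (C K k (l%:Z - 1)) (xB K)).
Proof.
move=> kl_gt0; case/lastP => [|w a]; rewrite /addB !mulB_mon /=.
  by rewrite C_nil -addn_eq0 eqn0Ngt kl_gt0 !mul0r addr0.
rewrite size_rcons subn1 /= -cats1 drop_size_cat // take_size_cat // cats1 C_rcons C_cons.
by case: a; rewrite /= !(mul1r, mul0r, addr0, add0r).
Qed.

Lemma powB_xB (n : nat) : powB (xB K) n =1 C K 0%N n.
Proof.
elim: n => [|n IHn] w; first by rewrite C_00.
rewrite /= mul_monB; case: w => [|[] w] /=.
- by rewrite C_nil mul0r.
- by rewrite C_cons_g0 mul0r.
- by rewrite take0 drop0 eqxx IHn C_cons_xS mul1r.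
Qed.

End Coefficients.

Theorem lemma2p10 (K : fieldType) :
  (forall k l : nat, (0 < k + l)%N ->
     C K k l = addB (mulB (gB K) (C K (k%:Z - 1) l)) (mulB (xB K) (C K k (l%:Z - 1)))
     /\ C K k l = addB (mulB (C K (k%:Z - 1) l) (gB K)) (mulB (C K k (l%:Z - 1)) (xB K)))
  /\ (forall n : nat,
     Delta (powB (xB K) n)
       = (fun u v => \sum_(k < n.+1) tens (C K k (n%:Z - k%:Z)) (powB (xB K) k) u v))
  /\ (forall p q : nat,
     Delta (C K p q)
       = (fun u v => \sum_(k < q.+1) tens (C K (p + k)%N (q%:Z - k%:Z)) (C K p k) u v)).
Proof.
split; [|split].
- move=> k l kl_gt0.
  by split; apply: functional_extensionality; [apply: C_recl | apply: C_recr].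
- move=> n; apply: functional_extensionality => u; apply: functional_extensionality => v.
  rewrite (eq_Delta _ _ (powB_xB K n)) Delta_C; apply: eq_bigr => k _.
  by rewrite /tens subzn ?add0n ?powB_xB // -ltnS.
- move=> p q; apply: functional_extensionality => u; apply: functional_extensionality => v.
  by rewrite Delta_C; apply: eq_bigr => k _; rewrite /tens subzn // -ltnS.
Qed.
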